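(* Assume the setting described in the context and suppose the event $\mathcal{E}$ holds. There is an absolute constant $C>0$ such that the following holds. Let $k'\ge k$ be an integer, let $\mathbf{w}\in\mathbb{R}^n$ be a unit vector with at most $k'$ nonzero entries, set $\alpha:=|\langle\mathbf{w},\mathbf{v}\rangle|$ and $\mathbf{y}:=\hat{\boldsymbol{\Gamma}}\mathbf{w}$ (so $\mathbf{y}=\theta\langle\mathbf{w},\mathbf{v}\rangle\mathbf{v}+\mathbf{W}\mathbf{w}$), and define $$ b:=C(1+\theta)\sqrt{\frac{k'\log n}{m}}. $$ Whenever $\theta\alpha>2b$, $$ \cos\angle\Big(\frac{\mathcal{H}_{k'}(\mathbf{y})}{\|\mathcal{H}_{k'}(\mathbf{y})\|_2},\mathbf{v}\Big)\ \ge\ \frac{\theta\alpha-2b}{\theta\alpha+b}\qquad\text{and}\qquad \sin\angle\Big(\frac{\mathcal{H}_{k'}(\mathbf{y})}{\|\mathcal{H}_{k'}(\mathbf{y})\|_2},\mathbf{v}\Big)\ \le\ \frac{5b}{\theta\alpha-2b}. $$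
   Context: Let $n\ge 2$, $m\ge1$, $\theta>0$, $k\in[n]$; $\mathbf{v}\in\mathbb{R}^n$ a unit vector with at most $k$ nonzero entries; $\mathbf{x}_1,\dots,\mathbf{x}_m$ i.i.d. $\mathcal{N}(\mathbf{0},\mathbf{I}_n+\theta\mathbf{v}\mathbf{v}^\top)$; $\hat{\boldsymbol{\Gamma}}=\frac1m\sum_i\mathbf{x}_i\mathbf{x}_i^\top-\mathbf{I}_n$; $\mathbf{W}=\hat{\boldsymbol{\Gamma}}-\theta\mathbf{v}\mathbf{v}^\top$. $\|\cdot\|_2$ is the Euclidean/spectral norm and $\mathbf{W}_{S,S}$ a principal submatrix. $\mathcal{H}_{k'}$ keeps the $k'$ largest-magnitude entries of a vector and zeroes the rest. For unit vectors, $\cos\angle(\mathbf{a},\mathbf{b})=|\langle\mathbf{a},\mathbf{b}\rangle|$ and $\sin\angle(\mathbf{a},\mathbf{b})=\sqrt{1-\langle\mathbf{a},\mathbf{b}\rangle^2}$. Fix an absolute constant $C_0>0$; $\mathcal{E}$ is the event that $\|\mathbf{W}_{S,S}\|_2\le C_0(1+\theta)\sqrt{|S|\log n/m}$ for all nonempty $S\subseteq[n]$. Absolute constants do not depend on $n,m,k,k',\theta,\mathbf{v},\mathbf{w}$. *)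

From HB Require Import structures.
From mathcomp Require Import all_boot all_order all_algebra.
From mathcomp Require Import boolp classical_sets reals exp.
Set Implicit Arguments. Unset Strict Implicit. Unset Printing Implicit Defensive.
Import Order.TTheory GRing.Theory Num.Theory.
Local Open Scope ring_scope.

Section Defs.
Variable R : realType.

Definition dotv (n : nat) (a b : 'cV[R]_n) : R := \sum_(i < n) a i 0 * b i 0.
Definition norm2 (n : nat) (a : 'cV[R]_n) : R := Num.sqrt (dotv a a).

Definition specnorm (p : nat) (A : 'M[R]_p) : R :=
  sup [set norm2 (A *m x) | x in [set x : 'cV[R]_p | norm2 x = 1]]%classic.

Definition principal_submx (n : nat) (A : 'M[R]_n) (S : {set 'I_n}) : 'M[R]_#|S| :=
  \matrix_(i < #|S|, j < #|S|) A (enum_val i) (enum_val j).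

Definition nnz (n : nat) (a : 'cV[R]_n) : nat := #|[set i | a i 0 != 0]|.

(* z is a valid output of H_{k'}(y): z keeps the entries of y on a set S of
   min(k', n) indices of largest magnitude (any tie-breaking) and zeroes the rest. *)
Definition is_hard_threshold (n k' : nat) (y z : 'cV[R]_n) : Prop :=
  exists S : {set 'I_n},
    [/\ #|S| = minn k' n,
        (forall i j, i \in S -> j \notin S -> `|y j 0| <= `|y i 0|)
      & forall i, z i 0 = if i \in S then y i 0 else 0].

Definition Gamma_hat (n m : nat) (x : 'I_m -> 'cV[R]_n) : 'M[R]_n :=
  (m%:R)^-1 *: (\sum_(i < m) x i *m (x i)^T) - 1%:M.

Definition Wnoise (n m : nat) (theta : R) (v : 'cV[R]_n) (x : 'I_m -> 'cV[R]_n)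
  : 'M[R]_n := Gamma_hat x - theta *: (v *m v^T).

Definition event_E (C0 : R) (n m : nat) (theta : R) (W : 'M[R]_n) : Prop :=
  forall S : {set 'I_n}, (0 < #|S|)%N ->
    specnorm (principal_submx W S)
      <= C0 * (1 + theta) * Num.sqrt (#|S|%:R * ln (n%:R) / m%:R).

(* angles between unit vectors *)
Definition cos_angle (n : nat) (a b : 'cV[R]_n) : R := `|dotv a b|.
Definition sin_angle (n : nat) (a b : 'cV[R]_n) : R := Num.sqrt (1 - dotv a b ^+ 2).

End Defs.

From HB Require Import structures.
From mathcomp Require Import all_boot all_order all_algebra.
From mathcomp Require Import boolp classical_sets reals exp.
From mathcomp Require Import ring lra.
Set Implicit Arguments. Unset Strict Implicit. Unset Printing Implicit Defensive.
Import Order.TTheory GRing.Theory Num.Theory.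
Local Open Scope ring_scope.

(* Write [y = Gamma_hat w = a v + r] with [a = theta <v, w>] and noise [r = W w].
   On the event E, the mass of [r] on any [k'] coordinates is at most
   [2 (C0 (1 + theta))^2 k' log n / m]: restrict [W] to those coordinates together
   with the support of [w], which has at most [2 k'] elements.  Hard thresholding
   keeps the [k'] largest [|y_i|], so the mass of [y] it discards on the support
   of [v] is at most the mass it keeps off that support, where [y = r]; hence
   [||z - a v|| <= b] with [C = 4 C0].  For a unit vector [v],
   [||z - a v||^2 = (||z||^2 - <z, v>^2) + (<z, v> - a)^2], so both the
   Cauchy-Schwarz gap and [|<z, v> - a|] are at most [b], and [|a| > 2 b] turns
   this into the bounds on the angle between [z] and [v]. *)

Section SetSums.
Variables (R : realFieldType) (T : finType).
Implicit Types (A B : {set T}) (F : T -> R).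

Lemma ler_sum_subset A B F : A \subset B -> (forall i, 0 <= F i) ->
  \sum_(i in A) F i <= \sum_(i in B) F i.
Proof.
move=> /fintype.subsetP AB F0; rewrite [leLHS]big_mkcond [leRHS]big_mkcond.
by apply: ler_sum => i _; case: ifP => [/AB -> //|_]; case: ifP.
Qed.

(* Compare [#|B|] copies of the left sum with [#|A|] copies of the right one. *)
Lemma ler_sum_dominated A B F : (#|A| <= #|B|)%N -> (forall i, 0 <= F i) ->
  (forall i j, i \in B -> j \in A -> F j <= F i) ->
  \sum_(j in A) F j <= \sum_(i in B) F i.
Proof.
move=> AB F0 FAB; have SB_ge0 : 0 <= \sum_(i in B) F i by apply: sumr_ge0.
have [B0|B_gt0] := posnP #|B|.
  by move: AB; rewrite B0 leqn0 => /eqP/cards0_eq ->; rewrite big_set0.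
rewrite -(ler_pMn2r B_gt0).
apply: (@le_trans _ _ ((\sum_(i in B) F i) *+ #|A|)).
  rewrite -sumrMnl -sumr_const; apply: ler_sum => j jA.
  by rewrite -sumr_const; apply: ler_sum => i iB; apply: FAB.
exact: ler_wpMn2l.
Qed.

End SetSums.

Section Vectors.
Variables (R : realType) (n : nat).
Implicit Types (a b c : 'cV[R]_n) (s : R).

Lemma dotvC a b : dotv a b = dotv b a.
Proof. by apply: eq_bigr => i _; rewrite mulrC. Qed.

Lemma dotvZl s a b : dotv (s *: a) b = s * dotv a b.
Proof. by rewrite /dotv mulr_sumr; apply: eq_bigr => i _; rewrite mxE mulrA. Qed.

Lemma dotvvE a : dotv a a = \sum_i a i 0 ^+ 2.
Proof. by apply: eq_bigr => i _; rewrite expr2. Qed.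

Lemma dotvv_ge0 a : 0 <= dotv a a.
Proof. by rewrite dotvvE; apply: sumr_ge0 => i _; apply: sqr_ge0. Qed.

Lemma sqr_norm2 a : norm2 a ^+ 2 = dotv a a.
Proof. by rewrite sqr_sqrtr // dotvv_ge0. Qed.

Lemma sqr_norm2E a : norm2 a ^+ 2 = \sum_i a i 0 ^+ 2.
Proof. by rewrite sqr_norm2 dotvvE. Qed.

Lemma mulmx_outer a b c : (a *m b^T) *m c = dotv b c *: a.
Proof.
apply/matrixP => i j; rewrite !mxE (ord1 j) /dotv mulr_suml; apply: eq_bigr => l _.
by rewrite !mxE big_ord1 !mxE -mulrA mulrC.
Qed.

Lemma norm2_eq1_coord_le1 a i : norm2 a = 1 -> `|a i 0| <= 1.
Proof.
move=> a1; rewrite -(@ler_pXn2r _ 2) ?nnegrE // real_normK ?num_real // expr1n.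
rewrite -(expr1n _ 2) -a1 sqr_norm2E (bigD1 i) //= lerDl.
by apply: sumr_ge0 => j _; apply: sqr_ge0.
Qed.

Lemma sqr_norm2_subZ_unit (z v : 'cV[R]_n) s : norm2 v = 1 ->
  norm2 (z - s *: v) ^+ 2 = (dotv z z - dotv z v ^+ 2) + (dotv z v - s) ^+ 2.
Proof.
move=> v1; have vv : dotv v v = 1 by rewrite -sqr_norm2 v1 expr1n.
have -> : dotv z z - dotv z v ^+ 2 + (dotv z v - s) ^+ 2 =
          dotv z z - 2 * s * dotv z v + s ^+ 2 * dotv v v by rewrite vv; ring.
rewrite sqr_norm2E /dotv.
under eq_bigr do rewrite !mxE.
rewrite (eq_bigr (fun i => z i 0 * z i 0 - 2 * s * (z i 0 * v i 0)
                           + s ^+ 2 * (v i 0 * v i 0))); last by move=> i _; ring.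
by rewrite big_split /= sumrB -!mulr_sumr.
Qed.

End Vectors.

Section AngleBounds.
Variable R : realType.
Implicit Types N D a b : R.

Lemma dist_le_of_split N D a b : 0 <= b -> D ^+ 2 <= N ->
  N - D ^+ 2 + (D - a) ^+ 2 <= b ^+ 2 -> `|D - a| <= b.
Proof.
move=> b0 DN err; rewrite -(@ler_pXn2r _ 2) ?nnegrE // real_normK ?num_real //.
by apply: le_trans err; rewrite lerDr subr_ge0.
Qed.

Lemma sqrt_le_of_split N D a b : 0 <= b -> D ^+ 2 <= N ->
  N - D ^+ 2 + (D - a) ^+ 2 <= b ^+ 2 -> Num.sqrt N <= `|a| + b.
Proof.
move=> b0 DN err; have N0 : 0 <= N by apply: le_trans DN; apply: sqr_ge0.
rewrite -(@ler_pXn2r _ 2) ?nnegrE ?sqrtr_ge0 ?addr_ge0 ?sqr_sqrtr //.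
have aD : a * (D - a) <= `|a| * b.
  apply: le_trans (ler_norm _) _.
  by rewrite normrM ler_wpM2l // (dist_le_of_split b0 DN err).
have sqra : `|a| ^+ 2 = a ^+ 2 by rewrite real_normK ?num_real.
nra.
Qed.

Lemma cos_ratio_ge N D a b : 0 <= b -> 2 * b < `|a| -> `|D - a| <= b ->
  D ^+ 2 <= N -> Num.sqrt N <= `|a| + b ->
  (`|a| - 2 * b) / (`|a| + b) <= `|(Num.sqrt N)^-1 * D|.
Proof.
move=> b0 ba Da DN sN; have := lerB_dist a D; rewrite distrC => aD.
have Ds : `|D| <= Num.sqrt N by rewrite -sqrtr_sqr ler_wsqrtr.
have s_gt0 : 0 < Num.sqrt N by lra.
rewrite normrM gtr0_norm ?invr_gt0 // ler_pdivrMr; last lra.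
rewrite -mulrA ler_pdivlMl //; nra.
Qed.

Lemma sin_ratio_le N D a b : 0 <= b -> 2 * b < `|a| -> `|D - a| <= b ->
  D ^+ 2 <= N -> N - D ^+ 2 <= b ^+ 2 ->
  Num.sqrt (1 - ((Num.sqrt N)^-1 * D) ^+ 2) <= 5 * b / (`|a| - 2 * b).
Proof.
move=> b0 ba Da DN gap; have := lerB_dist a D; rewrite distrC => aD.
have N_ge : (`|a| - 2 * b) ^+ 2 <= N.
  apply: le_trans DN; rewrite -[D ^+ 2]real_normK ?num_real // ler_pXn2r ?nnegrE //; lra.
have N_gt0 : 0 < N by apply: lt_le_trans N_ge; apply: exprn_gt0; lra.
have c_gt0 : 0 < `|a| - 2 * b by lra.
have -> : 1 - ((Num.sqrt N)^-1 * D) ^+ 2 = (N - D ^+ 2) / N.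
  by rewrite exprMn exprVn sqr_sqrtr ?ltW //; field; rewrite gt_eqF.
have r_ge0 : 0 <= 5 * b / (`|a| - 2 * b) by apply: divr_ge0; lra.
rewrite -(ger0_norm r_ge0) -sqrtr_sqr.
apply: ler_wsqrtr; rewrite ler_pdivrMr // expr_div_n mulrAC ler_pdivlMr ?exprn_gt0 //.
have : (N - D ^+ 2) * (`|a| - 2 * b) ^+ 2 <= b ^+ 2 * N.
  apply: le_trans (_ : b ^+ 2 * (`|a| - 2 * b) ^+ 2 <= _).
    by rewrite ler_wpM2r ?sqr_ge0.
  by rewrite ler_wpM2l ?sqr_ge0.
have := sqr_ge0 b; nra.
Qed.

End AngleBounds.

Lemma angle_bounds_of_dist_line (R : realType) n (z v : 'cV[R]_n) (a b : R) :
  norm2 v = 1 -> 0 <= b -> 2 * b < `|a| -> norm2 (z - a *: v) <= b ->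
  let u := (norm2 z)^-1 *: z in
  (`|a| - 2 * b) / (`|a| + b) <= cos_angle u v /\
  sin_angle u v <= 5 * b / (`|a| - 2 * b).
Proof.
move=> v1 b0 ba zb u; rewrite /cos_angle /sin_angle /u dotvZl.
have DN : dotv z v ^+ 2 <= dotv z z.
  have := sqr_ge0 (norm2 (z - dotv z v *: v)).
  by rewrite sqr_norm2_subZ_unit // subrr expr0n addr0 subr_ge0.
have err : dotv z z - dotv z v ^+ 2 + (dotv z v - a) ^+ 2 <= b ^+ 2.
  by rewrite -sqr_norm2_subZ_unit // ler_pXn2r ?nnegrE ?sqrtr_ge0.
have Da := dist_le_of_split b0 DN err.
split; first exact: cos_ratio_ge b0 ba Da DN (sqrt_le_of_split b0 DN err).
apply: sin_ratio_le b0 ba Da DN _.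
by apply: le_trans err; rewrite lerDl sqr_ge0.
Qed.

Section SpectralNorm.
Variables (R : realType) (n : nat).

Lemma norm2_mulmx_le_specnorm p (A : 'M[R]_p) (x : 'cV[R]_p) :
  norm2 x = 1 -> norm2 (A *m x) <= specnorm A.
Proof.
move=> x1; apply: sup_upper_bound; last by exists x.
split; first by exists (norm2 (A *m x)), x.
exists (Num.sqrt (\sum_i (\sum_j `|A i j|) ^+ 2)) => _ [y y1 <-].
rewrite ler_wsqrtr // dotvvE; apply: ler_sum => i _.
rewrite -real_normK ?num_real // ler_pXn2r ?nnegrE ?sumr_ge0 //.
rewrite mxE; apply: le_trans (ler_norm_sum _ _ _) _.
apply: ler_sum => j _; rewrite normrM -{2}(mulr1 `|A i j|).
by rewrite ler_wpM2l ?norm2_eq1_coord_le1.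
Qed.

Definition restrict_cV (U : {set 'I_n}) (w : 'cV[R]_n) : 'cV[R]_#|U| :=
  \col_j w (enum_val j) 0.

Lemma sum_enum_val_supported (U : {set 'I_n}) (F : 'I_n -> R) :
  (forall i, i \notin U -> F i = 0) -> \sum_(j < #|U|) F (enum_val j) = \sum_i F i.
Proof.
by move=> FU; rewrite -big_enum_val [RHS](bigID (mem U)) /= [X in _ + X]big1 ?addr0.
Qed.

Section Support.
Variables (U : {set 'I_n}) (w : 'cV[R]_n).
Hypothesis w_supp : forall i, i \notin U -> w i 0 = 0.

Lemma norm2_restrict : norm2 (restrict_cV U w) = norm2 w.
Proof.
rewrite /norm2 !dotvvE; congr Num.sqrt; under eq_bigr do rewrite mxE.
by apply: sum_enum_val_supported => i /w_supp ->; rewrite expr0n.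
Qed.

Lemma principal_submx_mulmx_restrict (A : 'M[R]_n) j :
  (principal_submx A U *m restrict_cV U w) j 0 = (A *m w) (enum_val j) 0.
Proof.
rewrite !mxE; under eq_bigr do rewrite !mxE.
by apply: sum_enum_val_supported => i /w_supp ->; rewrite mulr0.
Qed.

Lemma sum_sqr_mulmx_le (A : 'M[R]_n) (X : {set 'I_n}) (B : R) :
  norm2 w = 1 -> X \subset U -> specnorm (principal_submx A U) <= B ->
  \sum_(i in X) (A *m w) i 0 ^+ 2 <= B ^+ 2.
Proof.
move=> w1 XU AB.
have Ax := norm2_mulmx_le_specnorm (principal_submx A U) (etrans norm2_restrict w1).
apply: (@le_trans _ _ (norm2 (principal_submx A U *m restrict_cV U w) ^+ 2)).
  rewrite sqr_norm2E; under [leRHS]eq_bigr do rewrite principal_submx_mulmx_restrict.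
  rewrite -(big_enum_val (fun i => (A *m w) i 0 ^+ 2)) /=.
  by apply: ler_sum_subset => // i; apply: sqr_ge0.
have Bge0 : 0 <= B by apply: le_trans AB; apply: le_trans Ax; apply: sqrtr_ge0.
by rewrite ler_pXn2r ?nnegrE ?sqrtr_ge0 //; apply: le_trans AB.
Qed.

End Support.
End SpectralNorm.

Section HardThreshold.
Variables (R : realType) (n : nat).
Implicit Types (r v y z : 'cV[R]_n) (S V : {set 'I_n}).

Lemma hard_threshold_missed_le y S V : (#|V| <= #|S|)%N ->
  (forall i j, i \in S -> j \notin S -> `|y j 0| <= `|y i 0|) ->
  \sum_(i in V :\: S) y i 0 ^+ 2 <= \sum_(i in S :\: V) y i 0 ^+ 2.
Proof.
move=> VS yS; apply: ler_sum_dominated => [|i|i j].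
- by move: VS; rewrite -(cardsID S V) -(cardsID V S) finset.setIC leq_add2l.
- exact: sqr_ge0.
- rewrite !inE => /andP[_ iS] /andP[jS _].
  rewrite -[y j 0 ^+ 2]real_normK ?num_real // -[y i 0 ^+ 2]real_normK ?num_real //.
  by rewrite ler_pXn2r ?nnegrE ?yS.
Qed.

Lemma hard_threshold_error r v z (a : R) S V :
  (forall i, i \notin V -> v i 0 = 0) -> (#|V| <= #|S|)%N ->
  (forall i j, i \in S -> j \notin S -> `|(r + a *: v) j 0| <= `|(r + a *: v) i 0|) ->
  (forall i, z i 0 = if i \in S then (r + a *: v) i 0 else 0) ->
  norm2 (z - a *: v) ^+ 2 <= \sum_(i in S) r i 0 ^+ 2
    + 2 * \sum_(i in V :\: S) r i 0 ^+ 2 + 2 * \sum_(i in S :\: V) r i 0 ^+ 2.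
Proof.
move=> v_supp VS yS zE; set y := r + a *: v.
have yE i : y i 0 = r i 0 + a * v i 0 by rewrite !mxE.
have split_err : norm2 (z - a *: v) ^+ 2 =
    \sum_(i in S) r i 0 ^+ 2 + \sum_(i in V :\: S) (a * v i 0) ^+ 2.
  rewrite sqr_norm2E [\sum_(i in S) _]big_mkcond [\sum_(i in V :\: S) _]big_mkcond.
  rewrite -big_split /=.
  apply: eq_bigr => i _; rewrite !mxE zE yE !inE.
  case: (i \in S) => /=; first by rewrite addrK addr0.
  by case: (boolP (i \in V)) => [_|/v_supp ->]; rewrite ?mulr0 sub0r sqrrN ?add0r ?expr0n.
have missed_le : \sum_(i in V :\: S) (a * v i 0) ^+ 2 <=
    2 * \sum_(i in V :\: S) y i 0 ^+ 2 + 2 * \sum_(i in V :\: S) r i 0 ^+ 2.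
  rewrite !mulr_sumr -big_split /=; apply: ler_sum => i _.
  rewrite (_ : a * v i 0 = y i 0 - r i 0); last by rewrite yE addrC addKr.
  by have := sqr_ge0 (y i 0 + r i 0); nra.
have kept_eq : \sum_(i in S :\: V) y i 0 ^+ 2 = \sum_(i in S :\: V) r i 0 ^+ 2.
  apply: eq_bigr => i; rewrite !inE => /andP[/v_supp vi0 _].
  by rewrite yE vi0 mulr0 addr0.
have := hard_threshold_missed_le VS yS; rewrite split_err kept_eq; lra.
Qed.

End HardThreshold.

Lemma Gamma_hat_mulmx (R : realType) n m (theta : R) (v : 'cV[R]_n)
    (x : 'I_m -> 'cV[R]_n) (w : 'cV[R]_n) :
  Gamma_hat x *m w = Wnoise theta v x *m w + (theta * dotv v w) *: v.
Proof.
by rewrite /Wnoise [in RHS]mulmxBl -scalemxAl mulmx_outer scalerA subrK.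
Qed.

Lemma event_E_sum_sqr_le (R : realType) (C0 theta : R) (n m k' : nat) (W : 'M[R]_n)
    (w : 'cV[R]_n) (X : {set 'I_n}) :
  @event_E R C0 n m theta W -> norm2 w = 1 -> (nnz w <= k')%N -> (#|X| <= k')%N ->
  \sum_(i in X) (W *m w) i 0 ^+ 2
    <= 2 * ((C0 * (1 + theta)) ^+ 2 * (k'%:R * ln n%:R / m%:R)).
Proof.
move=> E w1 w_nnz X_le; set U := X :|: [set i | w i 0 != 0].
have w_supp i : i \notin U -> w i 0 = 0.
  by rewrite !inE negb_or negbK => /andP[_ /eqP].
have U_gt0 : (0 < #|U|)%N.
  rewrite card_gt0; apply: contra_neq (@oner_neq0 R) => U0.
  rewrite -(expr1n _ 2) -w1 sqr_norm2E big1 // => i _.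
  by rewrite w_supp ?U0 ?inE ?expr0n.
have U_le : (#|U| <= 2 * k')%N.
  by apply: leq_trans (leq_card_setU _ _) _; rewrite mul2n -addnn leq_add.
have L_ge0 : 0 <= ln (n%:R : R).
  apply: ln_ge0; rewrite ler1n; apply: leq_trans U_gt0 _.
  by rewrite -[leqRHS]card_ord max_card.
apply: le_trans (sum_sqr_mulmx_le w_supp w1 (finset.subsetUl _ _) (E U U_gt0)) _.
rewrite exprMn sqr_sqrtr ?mulr_ge0 ?invr_ge0 // [leRHS]mulrCA.
apply: ler_wpM2l; first exact: sqr_ge0.
rewrite !mulrA; apply: ler_wpM2r; first by rewrite invr_ge0.
by apply: ler_wpM2r => //; rewrite -natrM ler_nat.
Qed.

Lemma hard_threshold_dist_le (R : realType) (C0 theta : R) (n m k' : nat)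
    (v : 'cV[R]_n) (x : 'I_m -> 'cV[R]_n) (w z : 'cV[R]_n) :
  (0 < n)%N -> 0 <= C0 -> 0 <= theta -> (nnz v <= minn k' n)%N ->
  @event_E R C0 n m theta (Wnoise theta v x) ->
  norm2 w = 1 -> (nnz w <= k')%N ->
  is_hard_threshold k' (Gamma_hat x *m w) z ->
  norm2 (z - (theta * dotv v w) *: v)
    <= 4 * C0 * (1 + theta) * Num.sqrt (k'%:R * ln n%:R / m%:R).
Proof.
move=> n_gt0 C0_ge0 theta_ge0 v_nnz E w1 w_nnz [S [S_card S_top zE]].
set a := theta * dotv v w; set V := [set i | v i 0 != 0].
set K := (C0 * (1 + theta)) ^+ 2 * (k'%:R * ln n%:R / m%:R).
have v_supp i : i \notin V -> v i 0 = 0 by rewrite inE negbK => /eqP.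
have noise (X : {set 'I_n}) :
    (#|X| <= k')%N -> \sum_(i in X) (Wnoise theta v x *m w) i 0 ^+ 2 <= 2 * K.
  exact: event_E_sum_sqr_le E w1 w_nnz.
have S_le : (#|S| <= k')%N by rewrite S_card geq_minl.
have VS_le : (#|V :\: S| <= k')%N.
  apply: leq_trans (subset_leq_card (subsetDl _ _)) (leq_trans v_nnz _).
  exact: geq_minl.
have SV_le : (#|S :\: V| <= k')%N.
  exact: leq_trans (subset_leq_card (subsetDl _ _)) S_le.
rewrite (Gamma_hat_mulmx theta v) -/a in S_top zE.
have V_le_S : (#|V| <= #|S|)%N by rewrite S_card.
have err := hard_threshold_error v_supp V_le_S S_top zE.
have q_ge0 : 0 <= k'%:R * ln (n%:R : R) / m%:R.
  by rewrite !mulr_ge0 ?invr_ge0 // ln_ge0 // ler1n.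
rewrite -(@ler_pXn2r _ 2) ?nnegrE ?mulr_ge0 ?addr_ge0 ?sqrtr_ge0 //.
apply: le_trans err _; rewrite !exprMn sqr_sqrtr //.
(* The three noise sums contribute at most [(2 + 4 + 4) K <= 4 ^ 2 K]. *)
have := noise _ S_le; have := noise _ VS_le; have := noise _ SV_le.
have : 0 <= K by rewrite mulr_ge0 ?sqr_ge0.
rewrite /K exprMn; lra.
Qed.

Theorem proposition6 (R : realType) (C0 : R) (hC0 : 0 < C0) :
  exists C : R, 0 < C /\
  forall (n m k k' : nat) (theta : R) (v : 'cV[R]_n) (x : 'I_m -> 'cV[R]_n)
         (w : 'cV[R]_n) (z : 'cV[R]_n),
    (2 <= n)%N -> (1 <= m)%N -> 0 < theta -> (1 <= k <= n)%N ->
    norm2 v = 1 -> (nnz v <= k)%N ->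
    @event_E R C0 n m theta (Wnoise theta v x) ->
    (k <= k')%N -> norm2 w = 1 -> (nnz w <= k')%N ->
    let alpha := `|dotv w v| in
    let y := Gamma_hat x *m w in
    let b := C * (1 + theta) * Num.sqrt (k'%:R * ln (n%:R) / m%:R) in
    is_hard_threshold k' y z ->
    theta * alpha > 2 * b ->
    let u := (norm2 z)^-1 *: z in
    (theta * alpha - 2 * b) / (theta * alpha + b) <= cos_angle u v /\
    sin_angle u v <= 5 * b / (theta * alpha - 2 * b).
Proof.
exists (4 * C0); split; first by rewrite mulr_gt0.
move=> n m k k' theta v x w z n_ge2 _ theta_gt0 /andP[_ k_le_n] v1 v_nnz E.
move=> k_le_k' w1 w_nnz alpha y b thr b_lt u.
have v_nnz' : (nnz v <= minn k' n)%N by rewrite leq_min !(leq_trans v_nnz).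
have dist_le := hard_threshold_dist_le (ltnW n_ge2) (ltW hC0) (ltW theta_gt0)
  v_nnz' E w1 w_nnz thr.
have b_ge0 : 0 <= b by rewrite /b !mulr_ge0 ?sqrtr_ge0 ?addr_ge0 ?ltW.
have ta : theta * alpha = `|theta * dotv v w| by rewrite normrM gtr0_norm // dotvC.
by rewrite ta in b_lt *; apply: angle_bounds_of_dist_line.
Qed.
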